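(* Let $X$ be a finite $T_0$ space and $Y=X\circledast\mathbb{S}^0$ its non-Hausdorff suspension. Then $\mathrm{TC}(Y)=1$ if $X$ is contractible, and $\mathrm{TC}(Y)=4$ if $X$ is not contractible.
   Context: Finite $T_0$ spaces are identified with finite posets ($x^\downarrow=\{y:y\le x\}$ is the minimal open neighborhood of $x$; open sets are the down-closed sets). The non-Hausdorff join $A\circledast B$ of finite $T_0$ spaces $A,B$ is the disjoint union $A\sqcup B$ with the orders of $A$ and $B$ kept and additionally $a\le b$ for all $a\in A$, $b\in B$. $\mathbb{S}^0=\{x_0,y_0\}$ is the two-point discrete space, and $X\circledast\mathbb{S}^0$ is the non-Hausdorff suspension. Topological complexity is unreduced: for path-connected $Y$, with $\pi:Y^I\to Y\times Y$, $\gamma\mapsto(\gamma(0),\gamma(1))$ ($Y^I$ with compact-open topology), $\mathrm{TC}(Y)$ is the minimal $k$ such that $Y\times Y$ is covered by $k$ open sets each admitting a continuous section of $\pi$. *)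

From Stdlib Require Import Reals List.
Open Scope R_scope.

Definition opens (T : Type) := (T -> Prop) -> Prop.

Definition continuous {A B : Type} (oA : opens A) (oB : opens B) (f : A -> B) :=
  forall V, oB V -> oA (fun a => V (f a)).

Definition prod_open {A B : Type} (oA : opens A) (oB : opens B) : opens (A * B) :=
  fun W => forall p, W p -> exists U V, oA U /\ oB V /\ U (fst p) /\ V (snd p) /\
                          (forall a b, U a -> V b -> W (a, b)).

Definition sub_open {A : Type} (oA : opens A) (P : A -> Prop) : opens {a | P a} :=
  fun W => exists U, oA U /\ forall x, W x <-> U (proj1_sig x).

(** Topology generated by a subbasis S (finite intersections of members of S,
    the empty intersection being the whole space, then arbitrary unions). *)
Definition generated_open {A : Type} (S : (A -> Prop) -> Prop) : opens A :=
  fun W => forall a, W a -> exists l : list (A -> Prop),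
      (forall B, In B l -> S B) /\ (forall B, In B l -> B a) /\
      (forall x, (forall B, In B l -> B x) -> W x).

Definition compact {A : Type} (oA : opens A) (K : A -> Prop) :=
  forall F : (A -> Prop) -> Prop,
    (forall U, F U -> oA U) ->
    (forall a, K a -> exists U, F U /\ U a) ->
    exists l : list (A -> Prop), (forall U, In U l -> F U) /\
      (forall a, K a -> exists U, In U l /\ U a).

Definition R_open : opens R :=
  fun U => forall x, U x -> exists eps, 0 < eps /\ forall y, Rabs (y - x) < eps -> U y.

Definition unitI := {t : R | 0 <= t <= 1}.
Definition I_open : opens unitI := sub_open R_open (fun t => 0 <= t <= 1).
Definition I0 : unitI := exist _ 0 (conj (Rle_refl 0) Rle_0_1).
Definition I1 : unitI := exist _ 1 (conj Rle_0_1 (Rle_refl 1)).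

Definition cmap {A B : Type} (oA : opens A) (oB : opens B) :=
  {f : A -> B | continuous oA oB f}.

Definition compact_open {A B : Type} (oA : opens A) (oB : opens B) : opens (cmap oA oB) :=
  generated_open (fun W => exists K U, compact oA K /\ oB U /\
                     forall f : cmap oA oB, W f <-> forall a, K a -> U (proj1_sig f a)).

(** Finite T0 spaces = finite posets: open sets are the down-closed sets. *)
Definition alex_open {X : Type} (le : X -> X -> Prop) : opens X :=
  fun U => forall x y, U x -> le y x -> U y.

(** Non-Hausdorff suspension X ⊛ S^0 = X ⊔ {x0, y0}, with a <= pole for all a. *)
Inductive susp (X : Type) : Type :=
| base : X -> susp X
| pole : bool -> susp X.
Arguments base {X} _.
Arguments pole {X} _.

Definition susp_le {X : Type} (le : X -> X -> Prop) (u v : susp X) : Prop :=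
  match u, v with
  | base a, base b => le a b
  | base _, pole _ => True
  | pole b, pole c => b = c
  | pole _, base _ => False
  end.

Definition contractible {X : Type} (oX : opens X) : Prop :=
  exists (x0 : X) (H : X * unitI -> X),
    continuous (prod_open oX I_open) oX H /\
    forall x, H (x, I0) = x /\ H (x, I1) = x0.

(** Topological complexity (unreduced). *)
Section TC.
Context {Y : Type} (oY : opens Y).

Definition path_space := cmap I_open oY.
Definition path_open : opens path_space := compact_open I_open oY.
Definition endpoints (g : path_space) : Y * Y := (proj1_sig g I0, proj1_sig g I1).

Definition has_section (U : Y * Y -> Prop) : Prop :=
  exists s : {p | U p} -> path_space,
    continuous (sub_open (prod_open oY oY) U) path_open s /\
    forall p, endpoints (s p) = proj1_sig p.

Definition TC_cover (k : nat) : Prop :=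
  exists Us : nat -> (Y * Y -> Prop),
    (forall i, (i < k)%nat -> prod_open oY oY (Us i) /\ has_section (Us i)) /\
    (forall p, exists i, (i < k)%nat /\ Us i p).

Definition TC_eq (n : nat) : Prop :=
  TC_cover n /\ forall k, TC_cover k -> (n <= k)%nat.
End TC.

(* A map between finite T0 spaces is continuous iff it is monotone, and a path [0,1] -> T is
   a map each of whose values bounds the values at nearby times.  As T is finite, a path of
   monotone self-maps is then a fence of finitely many pointwise comparable maps, so homotopy
   is combinatorial (Stong).

   Upper bounds: Y x Y is covered by the down-sets of the four pole pairs, over each of which
   y1 can go up to a pole, down into X, up to a pole and down to y2; if X contracts to c, the
   contraction gives one section over all of Y x Y.  Lower bound: if fewer than four open sets
   cover Y x Y, one of them contains two pole pairs, and a section over it fences id_Y to a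
   constant.  Beat points of X stay beat points of Y, so removing them reduces to an X without
   beat points; if X still has two points then Y has no beat point either, and a fence from
   id_Y would fix both poles.  Hence X is fence-contractible, i.e. contractible. *)

From Pilot Require Import Defs.
From Stdlib Require Import Reals List Lra Lia ClassicalEpsilon ProofIrrelevance Classical.
Open Scope R_scope.

(** * Paths in a finite space *)

Lemma Rabs_lt_intro x y e : x - y < e -> y - x < e -> Rabs (x - y) < e.
Proof. intros; apply Rabs_def1; lra. Qed.

Lemma Rabs_lt_elim x y e : Rabs (x - y) < e -> x - y < e /\ y - x < e.
Proof. intros H; apply Rabs_def2 in H; lra. Qed.

Section Paths.
Context {T : Type} (le : T -> T -> Prop).
Hypothesis le_refl : forall x, le x x.

(* A path is a function on R of which only the values on [0,1] matter; continuity into the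
   Alexandrov topology says that g t bounds g on a neighbourhood of t. *)
Definition apath (g : R -> T) := forall t, 0 <= t <= 1 -> exists e, 0 < e /\
  forall t', 0 <= t' <= 1 -> Rabs (t' - t) < e -> le (g t') (g t).

Definition path_family {Z : Type} (leZ : Z -> Z -> Prop) (D : Z -> Prop) (g : Z -> R -> T) :=
  (forall z, D z -> apath (g z)) /\
  (forall z z', D z -> D z' -> leZ z z' -> forall t, 0 <= t <= 1 -> le (g z t) (g z' t)).

Definition path_cat (g1 g2 : R -> T) (t : R) : T :=
  if Rlt_dec t (/2) then g1 (2 * t) else if Rlt_dec (/2) t then g2 (2 * t - 1) else g1 1.

Definition path_rev (g : R -> T) (t : R) : T := g (1 - t).

Definition step_up (a b : T) (t : R) : T := if Rlt_dec t 1 then a else b.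

Definition step_down (a b : T) : R -> T := path_rev (step_up b a).

Lemma path_cat_0 g1 g2 : path_cat g1 g2 0 = g1 0.
Proof. unfold path_cat. destruct (Rlt_dec 0 (/2)); [|lra]. f_equal; ring. Qed.

Lemma path_cat_1 g1 g2 : path_cat g1 g2 1 = g2 1.
Proof.
  unfold path_cat. destruct (Rlt_dec 1 (/2)); [lra|].
  destruct (Rlt_dec (/2) 1); [|lra]. f_equal; ring.
Qed.

Lemma path_rev_0 g : path_rev g 0 = g 1.
Proof. unfold path_rev; f_equal; ring. Qed.

Lemma path_rev_1 g : path_rev g 1 = g 0.
Proof. unfold path_rev; f_equal; ring. Qed.

Lemma step_up_0 a b : step_up a b 0 = a.
Proof. unfold step_up; destruct (Rlt_dec 0 1); auto; lra. Qed.

Lemma step_up_1 a b : step_up a b 1 = b.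
Proof. unfold step_up; destruct (Rlt_dec 1 1); auto; lra. Qed.

Lemma step_down_0 a b : step_down a b 0 = a.
Proof. unfold step_down; rewrite path_rev_0; apply step_up_1. Qed.

Lemma step_down_1 a b : step_down a b 1 = b.
Proof. unfold step_down; rewrite path_rev_1; apply step_up_0. Qed.

Lemma apath_cat g1 g2 : apath g1 -> apath g2 -> g1 1 = g2 0 -> apath (path_cat g1 g2).
Proof.
  intros H1 H2 E t Ht. unfold path_cat. destruct (Rlt_dec t (/2)).
  - destruct (H1 (2 * t)) as [e [He Hl]]; [lra|].
    exists (Rmin (e / 2) (/2 - t)). split; [apply Rmin_glb_lt; lra|].
    intros t' Ht' Ha.
    pose proof (Rmin_l (e / 2) (/2 - t)); pose proof (Rmin_r (e / 2) (/2 - t)).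
    apply Rabs_lt_elim in Ha. destruct (Rlt_dec t' (/2)); [|lra].
    apply Hl; [lra|]. apply Rabs_lt_intro; lra.
  - destruct (Rlt_dec (/2) t).
    + destruct (H2 (2 * t - 1)) as [e [He Hl]]; [lra|].
      exists (Rmin (e / 2) (t - /2)). split; [apply Rmin_glb_lt; lra|].
      intros t' Ht' Ha.
      pose proof (Rmin_l (e / 2) (t - /2)); pose proof (Rmin_r (e / 2) (t - /2)).
      apply Rabs_lt_elim in Ha. destruct (Rlt_dec t' (/2)); [lra|].
      destruct (Rlt_dec (/2) t'); [|lra].
      apply Hl; [lra|]. apply Rabs_lt_intro; lra.
    + destruct (H1 1) as [e1 [He1 Hl1]]; [lra|].
      destruct (H2 0) as [e2 [He2 Hl2]]; [lra|].
      exists (Rmin (e1 / 2) (e2 / 2)). split; [apply Rmin_glb_lt; lra|].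
      intros t' Ht' Ha.
      pose proof (Rmin_l (e1 / 2) (e2 / 2)); pose proof (Rmin_r (e1 / 2) (e2 / 2)).
      apply Rabs_lt_elim in Ha. destruct (Rlt_dec t' (/2)).
      * apply Hl1; [lra|]. apply Rabs_lt_intro; lra.
      * destruct (Rlt_dec (/2) t'); [|apply le_refl].
        rewrite E. apply Hl2; [lra|]. apply Rabs_lt_intro; lra.
Qed.

Section Families.
Context {Z : Type} (leZ : Z -> Z -> Prop) (D : Z -> Prop).

Lemma path_family_cat g1 g2 :
  path_family leZ D g1 -> path_family leZ D g2 -> (forall z, D z -> g1 z 1 = g2 z 0) ->
  path_family leZ D (fun z => path_cat (g1 z) (g2 z)).
Proof.
  intros [P1 M1] [P2 M2] E. split.
  - intros z Hz. apply apath_cat; auto.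
  - intros z z' Hz Hz' Hzz t Ht. unfold path_cat.
    destruct (Rlt_dec t (/2)); [apply M1; auto; lra|].
    destruct (Rlt_dec (/2) t); [apply M2 | apply M1]; auto; lra.
Qed.

Lemma path_family_rev g : path_family leZ D g -> path_family leZ D (fun z => path_rev (g z)).
Proof.
  intros [P M]. split.
  - intros z Hz t Ht. destruct (P z Hz (1 - t)) as [e [He Hl]]; [lra|].
    exists e. split; [exact He|]. intros t' Ht' Ha. apply Hl; [lra|].
    apply Rabs_lt_elim in Ha. apply Rabs_lt_intro; lra.
  - intros z z' Hz Hz' Hzz t Ht. apply M; auto; lra.
Qed.

Lemma path_family_up (a b : Z -> T) :
  (forall z, D z -> le (a z) (b z)) ->
  (forall z z', D z -> D z' -> leZ z z' -> le (a z) (a z') /\ le (b z) (b z')) ->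
  path_family leZ D (fun z => step_up (a z) (b z)).
Proof.
  intros Hab M. split.
  - intros z Hz t Ht. unfold step_up. destruct (Rlt_dec t 1).
    + exists (1 - t). split; [lra|]. intros t' Ht' Ha. apply Rabs_lt_elim in Ha.
      destruct (Rlt_dec t' 1); [apply le_refl|lra].
    + exists 1. split; [lra|]. intros t' _ _. destruct (Rlt_dec t' 1); auto.
  - intros z z' Hz Hz' Hzz t Ht. unfold step_up. destruct (M z z' Hz Hz' Hzz).
    destruct (Rlt_dec t 1); auto.
Qed.

Lemma path_family_down (a b : Z -> T) :
  (forall z, D z -> le (b z) (a z)) ->
  (forall z z', D z -> D z' -> leZ z z' -> le (a z) (a z') /\ le (b z) (b z')) ->
  path_family leZ D (fun z => step_down (a z) (b z)).
Proof.
  intros Hab M. apply path_family_rev, path_family_up; [exact Hab|].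
  intros z z' Hz Hz' Hzz. destruct (M z z' Hz Hz' Hzz); auto.
Qed.

End Families.

Lemma path_family_comp {Z Z' : Type} (leZ : Z -> Z -> Prop) (leZ' : Z' -> Z' -> Prop)
  (D : Z -> Prop) (D' : Z' -> Prop) g (f : Z' -> Z) :
  path_family leZ D g -> (forall z, D' z -> D (f z)) ->
  (forall z z', D' z -> D' z' -> leZ' z z' -> leZ (f z) (f z')) ->
  path_family leZ' D' (fun z => g (f z)).
Proof. intros [P M] HD Hf. split; intros; auto. Qed.

End Paths.

(** * The Alexandrov topology *)

Definition clamp (r : R) : unitI :=
  match Rle_dec 0 r with
  | left h0 => match Rle_dec r 1 with
               | left h1 => exist _ r (conj h0 h1)
               | right _ => I1 end
  | right _ => I0 end.

Lemma clamp_val r : 0 <= r <= 1 -> proj1_sig (clamp r) = r.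
Proof.
  intros [h0 h1]. unfold clamp.
  destruct (Rle_dec 0 r); [|exfalso; lra]. destruct (Rle_dec r 1); [reflexivity|exfalso; lra].
Qed.

Lemma clamp_proj (t : unitI) : clamp (proj1_sig t) = t.
Proof.
  destruct t as [r [h0 h1]]. unfold clamp; simpl.
  destruct (Rle_dec 0 r); [|exfalso; lra]. destruct (Rle_dec r 1); [|exfalso; lra].
  f_equal. apply proof_irrelevance.
Qed.

Lemma clamp_0 : clamp 0 = I0.
Proof. exact (clamp_proj I0). Qed.

Lemma clamp_1 : clamp 1 = I1.
Proof. exact (clamp_proj I1). Qed.

Lemma R_open_ball (c e : R) : R_open (fun r => Rabs (r - c) < e).
Proof.
  intros r Hr. exists (e - Rabs (r - c)). split; [lra|].
  intros y Hy. pose proof (Rabs_triang (y - r) (r - c)).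
  replace (y - c) with ((y - r) + (r - c)) by ring. lra.
Qed.

Lemma compact_singleton {A : Type} (oA : opens A) (a : A) : Defs.compact oA (fun x => x = a).
Proof.
  intros F _ Hcov. destruct (Hcov a eq_refl) as [U [HU HUa]].
  exists (U :: nil). split.
  - intros V [<-|[]]; exact HU.
  - intros x ->. exists U. split; [left|]; auto.
Qed.

Section Alexandrov.
Context {T : Type} (le : T -> T -> Prop).
Hypothesis le_refl : forall x, le x x.
Hypothesis le_trans : forall x y z, le x y -> le y z -> le x z.

Definition le_pair (p q : T * T) := le (fst p) (fst q) /\ le (snd p) (snd q).

Lemma alex_open_down a : alex_open le (fun x => le x a).
Proof. intros x y Hx Hyx; eapply le_trans; eauto. Qed.

Lemma prod_alex_open_of_down_closed (O : T * T -> Prop) :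
  (forall p q, le_pair q p -> O p -> O q) -> prod_open (alex_open le) (alex_open le) O.
Proof.
  intros HO p Hp. exists (fun a => le a (fst p)), (fun b => le b (snd p)).
  repeat split; try apply alex_open_down; try apply le_refl.
  intros a b Ha Hb. apply (HO p); [split|]; auto.
Qed.

Lemma prod_alex_open_down_closed (O : T * T -> Prop) :
  prod_open (alex_open le) (alex_open le) O -> forall p q, le_pair q p -> O p -> O q.
Proof.
  intros HO p [a b] [H1 H2] Hp. destruct (HO _ Hp) as [U [V [HU [HV [Hu [Hv Hb]]]]]].
  apply Hb; [exact (HU _ _ Hu H1) | exact (HV _ _ Hv H2)].
Qed.

Lemma apath_continuous g :
  apath le g -> continuous I_open (alex_open le) (fun t => g (proj1_sig t)).
Proof.
  intros Hg V HV.
  exists (fun r => exists e, 0 < e /\ forall r', 0 <= r' <= 1 -> Rabs (r' - r) < e -> V (g r')).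
  split.
  - intros x [e [He Hx]]. exists (e / 2). split; [lra|]. intros y Hy. exists (e / 2).
    split; [lra|]. intros r' Hr' Ha. apply Hx; [exact Hr'|].
    apply Rabs_lt_elim in Hy. apply Rabs_lt_elim in Ha. apply Rabs_lt_intro; lra.
  - intros [r Hr]. simpl. split.
    + intros HVr. destruct (Hg r Hr) as [e [He Hl]]. exists e. split; [exact He|].
      intros r' Hr' Ha. eapply HV; [exact HVr | apply Hl; auto].
    + intros [e [He Hx]]. apply Hx; [exact Hr|]. rewrite Rminus_diag, Rabs_R0; lra.
Qed.

Lemma continuous_apath (g : unitI -> T) :
  continuous I_open (alex_open le) g -> apath le (fun r => g (clamp r)).
Proof.
  intros Hc t Ht. destruct (Hc _ (alex_open_down (g (clamp t)))) as [W [HW Hiff]].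
  assert (HWt : W t) by (rewrite <- (clamp_val t Ht); apply Hiff, le_refl).
  destruct (HW t HWt) as [e [He Hl]]. exists e. split; [exact He|].
  intros t' Ht' Ha. apply Hiff. rewrite (clamp_val t' Ht'). apply Hl; auto.
Qed.

Lemma section_of_path_family (U : T * T -> Prop) (g : T * T -> R -> T) :
  path_family le le_pair U g -> (forall p, U p -> g p 0 = fst p /\ g p 1 = snd p) ->
  has_section (alex_open le) U.
Proof.
  intros [Pg Mg] E.
  set (s := fun x : {p | U p} => exist (fun f => continuous I_open (alex_open le) f)
              (fun t => g (proj1_sig x) (proj1_sig t)) (apath_continuous _ (Pg _ (proj2_sig x)))).
  exists s. split.
  - intros W HW. exists (fun z => exists q : {p | U p}, le_pair z (proj1_sig q) /\ W (s q)).
    split.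
    + apply prod_alex_open_of_down_closed. intros p r Hrp [q [Hpq Hq]].
      exists q. split; [|exact Hq]. destruct Hrp, Hpq; split; eauto.
    + intros x. split.
      * intros Hx. exists x. split; [split; apply le_refl | exact Hx].
      * (* A basic neighbourhood of s q is a finite intersection of sets {f | f K <= V}
           with V down-closed, and s x <= s q pointwise. *)
        intros [q [Hxq Hq]]. destruct (HW _ Hq) as [l [Hl1 [Hl2 Hl3]]]. apply Hl3.
        intros B HB. destruct (Hl1 B HB) as [K [V [HK [HV Hiff]]]]. apply Hiff.
        intros a Ha. pose proof (proj1 (Hiff _) (Hl2 B HB) a Ha) as HVa.
        eapply HV; [exact HVa|]. apply Mg; auto; apply proj2_sig.
  - intros p. unfold endpoints; simpl. destruct (E _ (proj2_sig p)) as [E0 E1].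
    rewrite E0, E1. symmetry; apply surjective_pairing.
Qed.

Lemma path_open_eval_down (t : unitI) (y : T) :
  path_open (alex_open le) (fun f => le (proj1_sig f t) y).
Proof.
  intros f Hf. exists ((fun f : path_space (alex_open le) => le (proj1_sig f t) y) :: nil).
  split; [|split].
  - intros B [<-|[]]. exists (fun a => a = t), (fun x => le x y).
    split; [apply compact_singleton|]. split; [apply alex_open_down|].
    intros f'. split; [intros H a ->; exact H | intros H; apply H; reflexivity].
  - intros B [<-|[]]; exact Hf.
  - intros x Hx. apply Hx; left; reflexivity.
Qed.

Lemma section_monotone U (s : {p | U p} -> path_space (alex_open le)) :
  continuous (sub_open (prod_open (alex_open le) (alex_open le)) U) (path_open (alex_open le)) s ->
  forall p q, le_pair (proj1_sig p) (proj1_sig q) ->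
  forall t, le (proj1_sig (s p) t) (proj1_sig (s q) t).
Proof.
  intros Hs p q Hpq t.
  destruct (Hs _ (path_open_eval_down t (proj1_sig (s q) t))) as [O [HO Hiff]].
  apply Hiff. apply (prod_alex_open_down_closed O HO (proj1_sig q)); [exact Hpq|].
  apply Hiff, le_refl.
Qed.

Lemma section_path_family (U : T * T -> Prop) (u v : T -> T) :
  has_section (alex_open le) U -> (forall y, U (u y, v y)) ->
  (forall y y', le y y' -> le (u y) (u y') /\ le (v y) (v y')) ->
  exists K : T -> R -> T, path_family le le (fun _ => True) K /\
     forall y, K y 0 = u y /\ K y 1 = v y.
Proof.
  intros [s [Hs Hend]] HU Huv.
  exists (fun y r => proj1_sig (s (exist _ (u y, v y) (HU y))) (clamp r)).
  split; [split|].
  - intros y _. apply continuous_apath, proj2_sig.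
  - intros y y' _ _ Hyy t _. apply (section_monotone _ s Hs), Huv, Hyy.
  - intros y. rewrite clamp_0, clamp_1.
    pose proof (Hend (exist _ (u y, v y) (HU y))) as He.
    unfold endpoints in He; simpl in He. injection He. auto.
Qed.

Lemma homotopy_path_family (H : T * unitI -> T) :
  continuous (prod_open (alex_open le) I_open) (alex_open le) H ->
  path_family le le (fun _ => True) (fun a r => H (a, clamp r)).
Proof.
  intros Hc. split.
  - intros a _ t Ht.
    destruct (Hc _ (alex_open_down (H (a, clamp t))) (a, clamp t) (le_refl _))
      as [U1 [V1 [_ [[W [HW Hiff]] [Ha [Ht1 Hbox]]]]]].
    simpl in Ht1. apply Hiff in Ht1. rewrite (clamp_val t Ht) in Ht1.
    destruct (HW t Ht1) as [e [He Hl]]. exists e. split; [exact He|].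
    intros t' Ht' Hd. apply (Hbox a (clamp t') Ha), Hiff. rewrite (clamp_val t' Ht').
    apply Hl; auto.
  - intros a a' _ _ Haa t _.
    destruct (Hc _ (alex_open_down (H (a', clamp t))) (a', clamp t) (le_refl _))
      as [U1 [V1 [HU1 [_ [Ha [Ht1 Hbox]]]]]].
    apply (Hbox a (clamp t)); [exact (HU1 _ _ Ha Haa) | exact Ht1].
Qed.

Lemma path_family_homotopy (K : T -> R -> T) : path_family le le (fun _ => True) K ->
  continuous (prod_open (alex_open le) I_open) (alex_open le)
    (fun p => K (fst p) (proj1_sig (snd p))).
Proof.
  intros [P M] V HV [x t] Hxt. simpl in Hxt.
  destruct (P x I (proj1_sig t) (proj2_sig t)) as [e [He Hl]].
  exists (fun x' => le x' x), (fun t' : unitI => Rabs (proj1_sig t' - proj1_sig t) < e).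
  split; [apply alex_open_down|]. split.
  - exists (fun r => Rabs (r - proj1_sig t) < e). split; [apply R_open_ball | tauto].
  - split; [apply le_refl|]. split.
    + simpl. rewrite Rminus_diag, Rabs_R0; lra.
    + intros a b Ha Hb. simpl. eapply HV; [exact Hxt|]. eapply le_trans.
      * apply (M a x I I Ha). apply proj2_sig.
      * apply Hl; [apply proj2_sig | exact Hb].
Qed.

End Alexandrov.

(** * Fences and beat points *)

Lemma exists_maximal {T : Type} (le : T -> T -> Prop)
  (le_trans : forall x y z, le x y -> le y z -> le x z)
  (le_anti : forall x y, le x y -> le y x -> x = y) :
  forall l (P : T -> Prop), (forall x, P x -> In x l) -> (exists x, P x) ->
  exists x, P x /\ forall y, P y -> le x y -> y = x.
Proof.
  induction l as [|a l IH]; intros P HP [x0 Hx0]; [destruct (HP x0 Hx0)|].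
  destruct (classic (exists x, P x /\ x <> a)) as [Hex|Hno].
  - destruct (IH (fun x => P x /\ x <> a)) as [m [[Pm Hma] Hmax]].
    { intros x [Px Hxa]. destruct (HP x Px); [congruence|auto]. }
    { exact Hex. }
    destruct (classic (P a /\ le m a)) as [[Pa Hma']|Hn].
    + exists a. split; [exact Pa|]. intros y Py Hay.
      destruct (classic (y = a)) as [|Hya]; [assumption|exfalso].
      assert (y = m) by (apply Hmax; [split; auto | eapply le_trans; eauto]). subst y.
      apply Hma, le_anti; auto.
    + exists m. split; [exact Pm|]. intros y Py Hmy.
      destruct (classic (y = a)) as [->|Hya]; [exfalso; auto | apply Hmax; auto].
  - exists x0. split; [exact Hx0|]. intros y Py _.
    assert (y = a) by (apply NNPP; intro; apply Hno; eauto).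
    assert (x0 = a) by (apply NNPP; intro; apply Hno; eauto). congruence.
Qed.

Section MonotoneMaps.
Context {T : Type} (le : T -> T -> Prop).

Definition mono_map (S S' : T -> Prop) (f : T -> T) :=
  (forall x, S x -> S' (f x)) /\ (forall x y, S x -> S y -> le x y -> le (f x) (f y)).

Definition comparable_on (S : T -> Prop) (f g : T -> T) :=
  (forall x, S x -> le (f x) (g x)) \/ (forall x, S x -> le (g x) (f x)).

Lemma mono_map_id S S' : (forall x, S x -> S' x) -> mono_map S S' (fun x => x).
Proof. split; auto. Qed.

Lemma mono_map_comp S1 S2 S3 f g :
  mono_map S1 S2 f -> mono_map S2 S3 g -> mono_map S1 S3 (fun x => g (f x)).
Proof. intros [F1 F2] [G1 G2]. split; auto. Qed.

Lemma mono_map_ext S S' f f' :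
  mono_map S S' f -> (forall x, S x -> f x = f' x) -> mono_map S S' f'.
Proof. intros [F1 F2] E. split; intros; rewrite <- ?E by auto; auto. Qed.

Definition up_beat (S : T -> Prop) b := S b /\ exists m, S m /\ m <> b /\ le b m /\
  forall z, S z -> z <> b -> le b z -> le m z.

Definition remove_pt (S : T -> Prop) b x := S x /\ x <> b.

Definition retract_to (b m x : T) : T := if excluded_middle_informative (x = b) then m else x.

Hypothesis le_refl : forall x, le x x.
Hypothesis le_trans : forall x y z, le x y -> le y z -> le x z.
Hypothesis le_anti : forall x y, le x y -> le y x -> x = y.

Lemma up_beat_retract S b : up_beat S b -> exists m,
  mono_map S (remove_pt S b) (retract_to b m) /\ (forall x, S x -> le x (retract_to b m x)) /\
  (forall x, remove_pt S b x -> retract_to b m x = x).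
Proof.
  intros [Sb [m [Sm [Hmb [Hbm Hmin]]]]]. exists m. unfold retract_to.
  split; [split|split].
  - intros x Sx. destruct (excluded_middle_informative (x = b)); split; auto.
  - intros x y Sx Sy Hxy.
    destruct (excluded_middle_informative (x = b)), (excluded_middle_informative (y = b));
      subst; auto; [eapply le_trans; eauto].
  - intros x Sx. destruct (excluded_middle_informative (x = b)); subst; auto.
  - intros x [Sx Hxb]. destruct (excluded_middle_informative (x = b)); congruence.
Qed.

Lemma inflationary_fixed S l f : (forall x, S x -> In x l) -> (forall b, ~ up_beat S b) ->
  mono_map S S f -> (forall x, S x -> le x (f x)) -> forall x, S x -> f x = x.
Proof.
  intros Hl Hnb [M1 M2] Hinfl. apply NNPP. intros Hn.
  destruct (exists_maximal le le_trans le_anti l (fun x => S x /\ f x <> x))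
    as [x [[Sx Hfx] Hmax]]; [intros x [Sx _]; auto | |].
  { apply NNPP; intro H; apply Hn; intros x Sx; apply NNPP; intro; apply H; eauto. }
  (* A maximal point moved by f is an up beat point with cover f x. *)
  apply (Hnb x). split; [exact Sx|]. exists (f x). repeat split; auto.
  intros z Sz Hzx Hxz. assert (Hfz : f z = z) by (apply NNPP; intros Hfz; apply Hzx, Hmax; auto).
  rewrite <- Hfz. apply M2; auto.
Qed.

End MonotoneMaps.

Definition dual {T : Type} (le : T -> T -> Prop) x y := le y x.

Lemma mono_map_dual {T} (le : T -> T -> Prop) S S' f :
  mono_map le S S' f -> mono_map (dual le) S S' f.
Proof. intros [F1 F2]. split; [exact F1|]. intros x y Sx Sy; apply F2; auto. Qed.

Definition down_beat {T} (le : T -> T -> Prop) := up_beat (dual le).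

Definition beat {T} (le : T -> T -> Prop) S b := up_beat le S b \/ down_beat le S b.

Section Fences.
Context {T : Type} (le : T -> T -> Prop).

(* Fences of pointwise comparable monotone maps model homotopy between maps of finite
   T0 spaces; maps are only compared on S, the subspace under consideration. *)
Inductive fence (S : T -> Prop) : (T -> T) -> (T -> T) -> Prop :=
| fence_refl f g : mono_map le S S f -> (forall x, S x -> f x = g x) -> fence S f g
| fence_step f h g : mono_map le S S f -> comparable_on le S f h -> fence S h g -> fence S f g.

Definition fence_contractible S := exists c, S c /\ fence S (fun x => x) (fun _ => c).

Lemma fence_mono_l S f g : fence S f g -> mono_map le S S f.
Proof. destruct 1; auto. Qed.

Lemma fence_mono_r S f g : fence S f g -> mono_map le S S g.
Proof. induction 1; auto. eapply mono_map_ext; eauto. Qed.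

Lemma fence_ext S f g f' g' : fence S f g -> (forall x, S x -> f x = f' x) ->
  (forall x, S x -> g x = g' x) -> fence S f' g'.
Proof.
  intros F. revert f' g'. induction F as [f g Hm E|f h g Hm C F IH]; intros f' g' E1 E2.
  - apply fence_refl; [eapply mono_map_ext; eauto|].
    intros x Sx. rewrite <- E1, <- E2 by auto. auto.
  - apply fence_step with h; [eapply mono_map_ext; eauto | | apply IH; auto].
    destruct C as [C|C]; [left|right]; intros x Sx; rewrite <- E1 by auto; auto.
Qed.

Lemma fence_trans S f g h : fence S f g -> fence S g h -> fence S f h.
Proof.
  induction 1 as [f g Hm E|f k g Hm C F IH]; intros G.
  - eapply fence_ext; eauto. intros x Sx; rewrite E; auto.
  - apply fence_step with k; auto.
Qed.

Lemma fence_snoc S f g h : fence S f g -> mono_map le S S h -> comparable_on le S g h ->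
  fence S f h.
Proof.
  intros F Hh C. apply (fence_trans _ _ _ _ F). apply fence_step with h; auto.
  - apply (fence_mono_r _ _ _ F).
  - apply fence_refl; auto.
Qed.

Lemma fence_sym S f g : fence S f g -> fence S g f.
Proof.
  induction 1 as [f g Hm E|f h g Hm C F IH].
  - apply fence_refl; [eapply mono_map_ext|]; eauto. intros; symmetry; auto.
  - apply (fence_snoc _ _ _ _ IH Hm). destruct C; [right|left]; auto.
Qed.

Lemma fence_map S S' phi psi f g : fence S f g -> mono_map le S S' phi -> mono_map le S' S psi ->
  fence S' (fun x => phi (f (psi x))) (fun x => phi (g (psi x))).
Proof.
  intros F Hphi Hpsi. induction F as [f g Hm E|f h g Hm C F IH].
  - apply fence_refl; [eapply mono_map_comp; [eapply mono_map_comp|]; eauto|].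
    intros x Sx. rewrite E; [reflexivity|]. apply Hpsi, Sx.
  - apply fence_step with (fun x => phi (h (psi x))); auto.
    + eapply mono_map_comp; [eapply mono_map_comp|]; eauto.
    + destruct (fence_mono_l _ _ _ F) as [Hh _], Hm as [Hf _], Hpsi as [Hp _], Hphi as [_ Hm2].
      destruct C as [C|C]; [left|right]; intros x Sx; apply Hm2; auto.
Qed.

Lemma fence_contractible_ext S S' : (forall x, S x <-> S' x) ->
  fence_contractible S -> fence_contractible S'.
Proof.
  intros HS [c [Sc F]]. exists c. split; [apply HS, Sc|].
  apply (fence_map _ S' (fun x => x) (fun x => x) _ _ F); apply mono_map_id; apply HS.
Qed.

Hypothesis le_refl : forall x, le x x.
Hypothesis le_trans : forall x y z, le x y -> le y z -> le x z.
Hypothesis le_anti : forall x y, le x y -> le y x -> x = y.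

Lemma beat_retract S b : beat le S b -> exists r,
  mono_map le S (remove_pt S b) r /\ comparable_on le S (fun x => x) r /\
  (forall x, remove_pt S b x -> r x = x).
Proof.
  intros [Hb|Hb].
  - destruct (up_beat_retract le le_refl le_trans S b Hb) as [m [Hm [Hinfl Hid]]].
    exists (retract_to b m). split; [exact Hm|]. split; [left; exact Hinfl | exact Hid].
  - destruct (up_beat_retract (dual le) le_refl (fun x y z H1 H2 => le_trans z y x H2 H1) S b Hb)
      as [m [Hm [Hdefl Hid]]].
    exists (retract_to b m). split; [apply (mono_map_dual _ _ _ _ Hm)|].
    split; [right; exact Hdefl | exact Hid].
Qed.

Lemma fence_contractible_remove_beat S b : beat le S b ->
  fence_contractible S -> fence_contractible (remove_pt S b).
Proof.
  intros Hb [c [Sc F]]. destruct (beat_retract S b Hb) as [r [Hr [_ Hid]]].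
  pose proof (fence_map S (remove_pt S b) r (fun x => x) _ _ F Hr
    (mono_map_id _ _ _ (fun x H => proj1 H))) as G.
  exists (r c). split; [apply Hr, Sc|].
  eapply fence_ext; [exact G | |]; intros x Hx; simpl; auto.
Qed.

Lemma fence_contractible_add_beat S b : beat le S b ->
  fence_contractible (remove_pt S b) -> fence_contractible S.
Proof.
  intros Hb [c [Sc F]]. destruct (beat_retract S b Hb) as [r [Hr [Hc Hid]]].
  pose proof (fence_map (remove_pt S b) S (fun x => x) r _ _ F
    (mono_map_id _ _ _ (fun x H => proj1 H)) Hr) as G.
  exists c. split; [apply Sc|].
  apply fence_step with r; [apply mono_map_id; auto | exact Hc|].
  eapply fence_ext; [exact G | |]; intros x Hx; simpl; auto.
Qed.

Lemma fence_from_id S l f g : (forall x, S x -> In x l) -> (forall b, ~ beat le S b) ->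
  fence S f g -> (forall x, S x -> f x = x) -> forall x, S x -> g x = x.
Proof.
  intros Hl Hnb. induction 1 as [f g Hm E|f h g Hm C F IH]; intros Hf.
  - intros x Sx. rewrite <- E; auto.
  - apply IH. pose proof (fence_mono_l _ _ _ F) as Hh. destruct C as [C|C].
    + apply (inflationary_fixed le le_trans le_anti S l); auto.
      * intros b Hb; apply (Hnb b); left; exact Hb.
      * intros x Sx. rewrite <- (Hf x Sx) at 1. auto.
    + apply (inflationary_fixed (dual le) (fun x y z H1 H2 => le_trans z y x H2 H1)
               (fun x y H1 H2 => le_anti x y H2 H1) S l); auto.
      * intros b Hb; apply (Hnb b); right; exact Hb.
      * apply mono_map_dual, Hh.
      * intros x Sx. unfold dual. rewrite <- (Hf x Sx) at 2. auto.
Qed.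

Lemma beat_free_not_fence_contractible S l a b : (forall x, S x -> In x l) ->
  (forall b, ~ beat le S b) -> S a -> S b -> a <> b -> ~ fence_contractible S.
Proof.
  intros Hl Hnb Sa Sb Hab [c [Sc F]].
  pose proof (fence_from_id S l _ _ Hl Hnb F (fun x _ => eq_refl)) as E.
  apply Hab. rewrite <- (E a Sa), <- (E b Sb). reflexivity.
Qed.

End Fences.

Lemma unit_interval_connected (P : R -> Prop) : P 0 ->
  (forall t, 0 <= t <= 1 -> exists e, 0 < e /\
     forall s, 0 <= s <= 1 -> Rabs (s - t) < e -> (P s <-> P t)) ->
  P 1.
Proof.
  intros P0 Hloc.
  set (E := fun r => 0 <= r <= 1 /\ forall s, 0 <= s <= r -> P s).
  destruct (completeness E) as [sg [Hub Hlub]].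
  { exists 1. intros x [Hx _]. lra. }
  { exists 0. split; [lra|]. intros s Hs. replace s with 0 by lra. exact P0. }
  assert (Hs0 : 0 <= sg).
  { apply Hub. split; [lra|]. intros s Hs. replace s with 0 by lra. exact P0. }
  assert (Hs1 : sg <= 1) by (apply Hlub; intros x [Hx _]; lra).
  destruct (Hloc sg (conj Hs0 Hs1)) as [e [He Hl]].
  assert (Hr : exists r, E r /\ sg - e < r).
  { apply NNPP; intros Hn. assert (sg <= sg - e); [|lra]. apply Hlub. intros x Ex.
    apply Rnot_lt_le. intros Hx; apply Hn; eauto. }
  destruct Hr as [r [[Hr01 Er] Hr]].
  assert (Hrs : r <= sg) by (apply Hub; split; auto).
  assert (Psg : P sg) by (apply (Hl r); [lra | apply Rabs_lt_intro; lra | apply Er; lra]).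
  destruct (Rlt_dec sg 1) as [Hlt|Hge]; [exfalso|replace 1 with sg by lra; exact Psg].
  set (r' := Rmin 1 (sg + e / 2)).
  assert (r' <= 1) by apply Rmin_l. assert (r' <= sg + e / 2) by apply Rmin_r.
  assert (sg < r') by (apply Rmin_glb_lt; lra).
  assert (E r').
  { split; [lra|]. intros s Hs. destruct (Rle_dec s r); [apply Er; lra|].
    apply (Hl s); [lra | apply Rabs_lt_intro; lra | exact Psg]. }
  assert (r' <= sg) by (apply Hub; auto). lra.
Qed.

Lemma common_radius {A : Type} (Q : A -> R -> Prop) (l : list A) :
  (forall a e e', Q a e -> 0 < e' <= e -> Q a e') ->
  (forall a, In a l -> exists e, 0 < e /\ Q a e) ->
  exists e, 0 < e /\ forall a, In a l -> Q a e.
Proof.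
  intros Hmon. induction l as [|a l IH]; intros H.
  - exists 1. split; [lra | intros a []].
  - destruct (H a (or_introl eq_refl)) as [e1 [He1 Q1]].
    destruct IH as [e2 [He2 Q2]]; [intros b Hb; apply H; right; exact Hb|].
    pose proof (Rmin_l e1 e2); pose proof (Rmin_r e1 e2).
    assert (0 < Rmin e1 e2) by (apply Rmin_glb_lt; auto).
    exists (Rmin e1 e2). split; [assumption|].
    intros b [<-|Hb]; [apply (Hmon _ e1) | apply (Hmon _ e2)]; auto.
Qed.

Section FiniteFences.
Context {T : Type} (le : T -> T -> Prop).
Hypothesis le_refl : forall x, le x x.
Hypothesis le_trans : forall x y z, le x y -> le y z -> le x z.
Variable enumT : list T.
Hypothesis enumT_complete : forall x, In x enumT.

Lemma path_family_uniform (K : T -> R -> T) : path_family le le (fun _ => True) K ->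
  forall t, 0 <= t <= 1 -> exists e, 0 < e /\ forall t', 0 <= t' <= 1 ->
    Rabs (t' - t) < e -> forall y, le (K y t') (K y t).
Proof.
  intros [P _] t Ht.
  destruct (common_radius (fun y e => forall t', 0 <= t' <= 1 -> Rabs (t' - t) < e ->
              le (K y t') (K y t)) enumT) as [e [He Hq]].
  - intros y e e' Hq [He' Hee] t' Ht' Ha. apply Hq; [exact Ht'|lra].
  - intros y _. exact (P y I t Ht).
  - exists e. split; [exact He|]. intros t' Ht' Ha y. apply Hq; auto.
Qed.

(* Each K t is comparable to every K t' with t' near t, uniformly in y as T is finite, so
   the set of t with a fence from K 0 to K t is open and closed in [0,1]. *)
Lemma path_family_fence (K : T -> R -> T) : path_family le le (fun _ => True) K ->
  fence le (fun _ => True) (fun y => K y 0) (fun y => K y 1).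
Proof.
  intros HK. pose proof HK as [_ M].
  assert (Mono : forall t, 0 <= t <= 1 ->
                  mono_map le (fun _ => True) (fun _ => True) (fun y => K y t))
    by (intros t Ht; split; intros; auto).
  apply (unit_interval_connected
           (fun r => fence le (fun _ => True) (fun y => K y 0) (fun y => K y r))).
  { apply fence_refl; auto. apply Mono; lra. }
  intros t Ht. destruct (path_family_uniform K HK t Ht) as [e [He Hl]].
  exists e. split; [exact He|]. intros s Hs Hst. split; intros F.
  - apply (fence_snoc le _ _ _ _ F); [apply Mono, Ht|]. left. intros y _. apply Hl; auto.
  - apply (fence_snoc le _ _ _ _ F); [apply Mono, Hs|]. right. intros y _. apply Hl; auto.
Qed.

Lemma fence_of_section (O : T * T -> Prop) (u v : T -> T) :
  has_section (alex_open le) O -> (forall y, O (u y, v y)) ->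
  (forall y y', le y y' -> le (u y) (u y') /\ le (v y) (v y')) ->
  fence le (fun _ => True) u v.
Proof.
  intros Hs HO Huv.
  destruct (section_path_family le le_refl le_trans O u v Hs HO Huv) as [K [HK E]].
  apply (fence_ext le _ _ _ _ _ (path_family_fence K HK)); intros y _; apply E.
Qed.

Lemma fence_contractible_of_section (O : T * T -> Prop) (g : T -> T) (c : T) :
  has_section (alex_open le) O -> (forall y, O (y, g y)) \/ (forall y, O (g y, y)) ->
  (forall y y', le y y' -> le (g y) (g y')) -> comparable_on le (fun _ => True) g (fun _ => c) ->
  fence_contractible le (fun _ => True).
Proof.
  intros Hs HO Hg Hc. exists c. split; [exact I|].
  apply (fence_snoc le _ _ g); [| split; auto | exact Hc].
  destruct HO as [HO|HO].
  - apply (fence_of_section O); auto.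
  - apply fence_sym. apply (fence_of_section O); auto.
Qed.

End FiniteFences.

Section FenceHomotopy.
Context {T : Type} (le : T -> T -> Prop).
Hypothesis le_refl : forall x, le x x.
Hypothesis le_trans : forall x y z, le x y -> le y z -> le x z.

Lemma path_family_of_fence f g : fence le (fun _ => True) f g ->
  exists K, path_family le le (fun _ => True) K /\ forall x, K x 0 = f x /\ K x 1 = g x.
Proof.
  induction 1 as [f g Hm E|f h g Hm C F IH].
  - exists (fun x _ => f x). split; [split|].
    + intros z _ t Ht. exists 1. split; [lra | intros; apply le_refl].
    + intros z z' _ _ Hzz t Ht. apply Hm; auto.
    + intros x. split; auto.
  - destruct IH as [K2 [HK2 E2]].
    pose proof (fence_mono_l le _ _ _ F) as Hh.
    assert (Hmono : forall z z', True -> True -> le z z' -> le (f z) (f z') /\ le (h z) (h z'))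
      by (intros z z' _ _ Hzz; split; [apply Hm|apply Hh]; auto).
    assert (Hstep : exists K1, path_family le le (fun _ => True) K1 /\
                      forall x, K1 x 0 = f x /\ K1 x 1 = h x).
    { destruct C as [C|C].
      - exists (fun x => step_up (f x) (h x)). split; [apply path_family_up; auto|].
        intros x. rewrite step_up_0, step_up_1. auto.
      - exists (fun x => step_down (f x) (h x)). split; [apply path_family_down; auto|].
        intros x. rewrite step_down_0, step_down_1. auto. }
    destruct Hstep as [K1 [HK1 E1]].
    exists (fun x => path_cat (K1 x) (K2 x)). split.
    + apply path_family_cat; auto. intros x _. destruct (E1 x), (E2 x). congruence.
    + intros x. rewrite path_cat_0, path_cat_1. destruct (E1 x), (E2 x). auto.
Qed.

Lemma contractible_of_fence_contractible :
  fence_contractible le (fun _ => True) -> contractible (alex_open le).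
Proof.
  intros [c [_ F]]. destruct (path_family_of_fence _ _ F) as [K [HK E]].
  exists c, (fun p => K (fst p) (proj1_sig (snd p))). split.
  - apply path_family_homotopy; auto.
  - intros x. exact (E x).
Qed.

End FenceHomotopy.

(** * The non-Hausdorff suspension *)

Section Suspension.
Context {X : Type} (le : X -> X -> Prop).
Hypothesis le_refl : forall x, le x x.
Hypothesis le_trans : forall x y z, le x y -> le y z -> le x z.
Hypothesis le_anti : forall x y, le x y -> le y x -> x = y.

Lemma susp_le_refl y : susp_le le y y.
Proof. destruct y; simpl; auto. Qed.

Lemma susp_le_trans x y z : susp_le le x y -> susp_le le y z -> susp_le le x z.
Proof. destruct x, y, z; simpl; intros; subst; eauto; contradiction. Qed.

Lemma susp_le_anti x y : susp_le le x y -> susp_le le y x -> x = y.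
Proof. destruct x, y; simpl; intros; subst; try contradiction; f_equal; auto. Qed.

Definition susp_pred (SX : X -> Prop) (y : susp X) : Prop :=
  match y with base a => SX a | pole _ => True end.

Definition susp_enum (l : list X) : list (susp X) := pole true :: pole false :: map base l.

Lemma susp_enum_complete SX l : (forall x, SX x -> In x l) ->
  forall y, susp_pred SX y -> In y (susp_enum l).
Proof. intros Hl [a|[|]] Hy; simpl in *; auto. right; right. apply in_map; auto. Qed.

Lemma remove_base_susp SX b y :
  remove_pt (susp_pred SX) (base b) y <-> susp_pred (remove_pt SX b) y.
Proof. destruct y; unfold remove_pt; simpl; intuition congruence. Qed.

Lemma beat_susp SX b : beat le SX b -> beat (susp_le le) (susp_pred SX) (base b).
Proof.
  intros [[Sb [m [Sm [Hmb [Hbm Hmin]]]]]|[Sb [m [Sm [Hmb [Hbm Hmax]]]]]]; [left|right];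
    (split; [exact Sb|]); exists (base m); (split; [exact Sm|]); (split; [congruence|]);
    (split; [exact Hbm|]); intros [z|z] Sz Hz Hbz; simpl in *; auto; try contradiction;
    [apply Hmin | apply Hmax]; auto; congruence.
Qed.

(* Below a maximum, a maximal element of the rest is an up beat point. *)
Lemma beat_of_maximum SX l m a : (forall x, SX x -> In x l) -> SX m ->
  (forall z, SX z -> le z m) -> SX a -> a <> m -> exists b, beat le SX b.
Proof.
  intros Hl Sm Hm Sa Ham.
  destruct (exists_maximal le le_trans le_anti l (fun z => SX z /\ z <> m))
    as [z [[Sz Hzm] Hmax]]; [intros x [Sx _]; auto | eauto |].
  exists z. left. split; [exact Sz|]. exists m. repeat split; auto.
  intros w Sw Hwz Hzw. destruct (classic (w = m)) as [->|Hwm]; [apply le_refl|].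
  exfalso. apply Hwz, Hmax; auto.
Qed.

(* A base point that is a beat point of the suspension is one of X, since its cover cannot
   be a pole (the poles are incomparable); a pole is a down beat point only if X has a
   maximum, which together with a second point yields a beat point of X. *)
Lemma susp_beat_free SX l a a' : (forall x, SX x -> In x l) -> (forall b, ~ beat le SX b) ->
  SX a -> SX a' -> a <> a' -> forall y, ~ beat (susp_le le) (susp_pred SX) y.
Proof.
  intros Hl Hnb Sa Sa' Haa [b|b] [[Sy [m [Sm [Hmy [Hym Hmin]]]]]|[Sy [m [Sm [Hmy [Hym Hmax]]]]]].
  - destruct m as [m|c].
    + apply (Hnb b). left. split; [exact Sy|]. exists m. simpl in *.
      repeat split; auto; [congruence|]. intros z Sz Hz Hbz.
      apply (Hmin (base z)); simpl; auto; congruence.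
    + pose proof (Hmin (pole (negb c)) I ltac:(congruence) I) as H. simpl in H.
      destruct c; discriminate.
  - destruct m as [m|c]; simpl in Hym; [|contradiction].
    apply (Hnb b). right. split; [exact Sy|]. exists m. simpl in *.
    repeat split; auto; [congruence|]. intros z Sz Hz Hzb.
    apply (Hmax (base z)); simpl; auto; congruence.
  - destruct m as [m|c]; simpl in Hym; [contradiction|]. subst c. congruence.
  - destruct m as [m|c]; simpl in Hym; [|subst; congruence].
    assert (Hm : forall z, SX z -> le z m)
      by (intros z Sz; apply (Hmax (base z)); simpl; auto; congruence).
    destruct (classic (a = m)) as [->|Ham].
    + destruct (beat_of_maximum SX l m a' Hl Sm Hm Sa' ltac:(congruence)) as [b0 Hb0].
      exact (Hnb b0 Hb0).
    + destruct (beat_of_maximum SX l m a Hl Sm Hm Sa Ham) as [b0 Hb0]. exact (Hnb b0 Hb0).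
Qed.

Lemma fence_contractible_of_susp : forall n SX l, (length l <= n)%nat ->
  (forall x, SX x -> In x l) -> (exists x, SX x) ->
  fence_contractible (susp_le le) (susp_pred SX) -> fence_contractible le SX.
Proof.
  induction n as [|n IH]; intros SX l Hlen Hl [x0 Hx0] HFC.
  { destruct l; [destruct (Hl x0 Hx0) | simpl in Hlen; lia]. }
  destruct (classic (exists b, beat le SX b)) as [[b Hb]|Hnb].
  - (* b is also a beat point of the suspension, so it can be removed on both sides. *)
    apply (fence_contractible_add_beat le le_refl le_trans le_anti SX b Hb).
    assert (Sb : SX b) by (destruct Hb as [[Sb _]|[Sb _]]; exact Sb).
    apply IH with (l := remove (fun x y => excluded_middle_informative (x = y)) b l).
    + pose proof (remove_length_lt (fun x y => excluded_middle_informative (x = y)) l b (Hl b Sb)).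
      lia.
    + intros x [Sx Hxb]. apply in_in_remove; auto.
    + destruct Hb as [[_ [m [Sm [Hmb _]]]]|[_ [m [Sm [Hmb _]]]]]; exists m; split; auto.
    + apply (fence_contractible_ext _ _ _ (remove_base_susp SX b)).
      apply (fence_contractible_remove_beat _ (susp_le_refl) susp_le_trans susp_le_anti).
      * apply beat_susp, Hb.
      * exact HFC.
  - destruct (classic (exists a a', SX a /\ SX a' /\ a <> a')) as [[a [a' [Sa [Sa' Haa]]]]|Hone].
    + exfalso. apply (beat_free_not_fence_contractible _ susp_le_trans susp_le_anti
        (susp_pred SX) (susp_enum l) (pole true) (pole false)).
      * apply susp_enum_complete, Hl.
      * apply (susp_beat_free SX l a a'); auto. intros b Hb; apply Hnb; eauto.
      * exact I.
      * exact I.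
      * discriminate.
      * exact HFC.
    + exists x0. split; [exact Hx0|]. apply fence_refl; [split; auto|].
      intros x Sx. apply NNPP; intros Hx. apply Hone. exists x, x0. auto.
Qed.

End Suspension.

(** * Topological complexity of the suspension *)

Section SuspensionTC.
Context {X : Type} (le : X -> X -> Prop).
Hypothesis le_refl : forall x, le x x.
Hypothesis le_trans : forall x y z, le x y -> le y z -> le x z.
Hypothesis le_anti : forall x y, le x y -> le y x -> x = y.
Variable x0 : X.

Notation Y := (susp X).
Notation sle := (susp_le le).
Notation oY := (alex_open (susp_le le)).

Let sle_refl : forall y, sle y y := susp_le_refl le le_refl.
Let sle_trans : forall x y z, sle x y -> sle y z -> sle x z := susp_le_trans le le_trans.

Definition below_poles (P Q : bool) (p : Y * Y) := sle (fst p) (pole P) /\ sle (snd p) (pole Q).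

Lemma below_poles_section P Q : has_section oY (below_poles P Q).
Proof.
  apply (section_of_path_family sle sle_refl sle_trans _
    (fun p => path_cat (path_cat (step_up (fst p) (pole P)) (step_down (pole P) (base x0)))
                       (path_cat (step_up (base x0) (pole Q)) (step_down (pole Q) (snd p))))).
  - apply (path_family_cat sle sle_refl);
      [apply (path_family_cat sle sle_refl) | apply (path_family_cat sle sle_refl) |].
    + apply (path_family_up sle sle_refl); [intros z [Hz _]; exact Hz|].
      intros z z' _ _ [H1 _]. split; [exact H1 | reflexivity].
    + apply (path_family_down sle sle_refl); simpl; auto.
    + intros z _. rewrite step_up_1, step_down_0. reflexivity.
    + apply (path_family_up sle sle_refl); simpl; auto.
    + apply (path_family_down sle sle_refl); [intros z [_ Hz]; exact Hz|].
      intros z z' _ _ [_ H2]. split; [reflexivity | exact H2].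
    + intros z _. rewrite step_up_1, step_down_0. reflexivity.
    + intros z _. rewrite path_cat_1, step_down_1, path_cat_0, step_up_0. reflexivity.
  - intros p _. rewrite !path_cat_0, step_up_0, !path_cat_1, step_down_1. auto.
Qed.

Definition side (y : Y) : bool := match y with pole b => b | base _ => true end.

Lemma le_pole_side y : sle y (pole (side y)).
Proof. destruct y; simpl; auto. Qed.

Lemma TC_cover_four : TC_cover oY 4.
Proof.
  exists (fun i => match i with 0 => below_poles true true | 1 => below_poles true false
                           | 2 => below_poles false true | _ => below_poles false false end)%nat.
  split.
  - assert (H : forall P Q, prod_open oY oY (below_poles P Q) /\ has_section oY (below_poles P Q)).
    { intros P Q. split; [|apply below_poles_section].
      apply (prod_alex_open_of_down_closed sle sle_refl sle_trans).
      intros p q [H1 H2] [H3 H4]. split; eapply sle_trans; eauto. }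
    intros [|[|[|i]]] _; apply H.
  - intros [y1 y2]. pose proof (le_pole_side y1); pose proof (le_pole_side y2).
    destruct (side y1), (side y2).
    + exists 0%nat. split; [lia | split; auto].
    + exists 1%nat. split; [lia | split; auto].
    + exists 2%nat. split; [lia | split; auto].
    + exists 3%nat. split; [lia | split; auto].
Qed.

Section Contractible.
Variable c : X.
Variable H : X * unitI -> X.
Hypothesis H_continuous : continuous (prod_open (alex_open le) I_open) (alex_open le) H.
Hypothesis H_ends : forall x, H (x, I0) = x /\ H (x, I1) = c.

Definition contraction_path (y : Y) : R -> Y :=
  match y with base a => fun r => base (H (a, clamp r)) | pole b => fun _ => pole b end.

Definition contraction_end (y : Y) : Y := match y with base _ => base c | pole b => pole b end.

Lemma contraction_path_family : path_family sle sle (fun _ => True) contraction_path.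
Proof.
  destruct (homotopy_path_family le le_refl le_trans H H_continuous) as [P M]. split.
  - intros [a|b] _ t Ht; simpl.
    + destruct (P a I t Ht) as [e [He Hl]]. exists e. auto.
    + exists 1. split; [lra | intros; reflexivity].
  - intros [a|b] [a'|b'] _ _ Hzz t Ht; simpl in *; auto.
Qed.

Lemma contraction_path_0 y : contraction_path y 0 = y.
Proof. destruct y; simpl; auto. rewrite clamp_0, (proj1 (H_ends x)). reflexivity. Qed.

Lemma contraction_path_1 y : contraction_path y 1 = contraction_end y.
Proof. destruct y; simpl; auto. rewrite clamp_1, (proj2 (H_ends x)). reflexivity. Qed.

Lemma contraction_section : has_section oY (fun _ => True).
Proof.
  apply (section_of_path_family sle sle_refl sle_trans _
    (fun p => path_cat (contraction_path (fst p))
       (path_cat (path_cat (step_down (contraction_end (fst p)) (base c))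
                           (step_up (base c) (contraction_end (snd p))))
                 (path_rev (contraction_path (snd p)))))).
  - apply (path_family_cat sle sle_refl);
      [| apply (path_family_cat sle sle_refl); [apply (path_family_cat sle sle_refl) | |] |].
    + apply (path_family_comp _ sle _ _ (fun _ => True) _ fst contraction_path_family); auto.
      intros z z' _ _ [H1 _]; exact H1.
    + apply (path_family_down sle sle_refl); [intros [[a|b] y] _; simpl; auto|].
      intros [[a|b] y] [[a'|b'] y'] _ _ [H1 _]; simpl in *; split; auto; contradiction.
    + apply (path_family_up sle sle_refl); [intros [y [a|b]] _; simpl; auto|].
      intros [y [a|b]] [y' [a'|b']] _ _ [_ H1]; simpl in *; split; auto; contradiction.
    + intros z _. rewrite step_down_1, step_up_0. reflexivity.
    + apply path_family_rev.
      apply (path_family_comp _ sle _ _ (fun _ => True) _ snd contraction_path_family); auto.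
      intros z z' _ _ [_ H1]; exact H1.
    + intros z _. rewrite path_cat_1, step_up_1, path_rev_0, contraction_path_1. reflexivity.
    + intros z _. rewrite contraction_path_1, !path_cat_0, step_down_0. reflexivity.
  - intros p _. rewrite path_cat_0, contraction_path_0, !path_cat_1, path_rev_1, contraction_path_0.
    auto.
Qed.

End Contractible.

Variable enumX : list X.
Hypothesis enumX_complete : forall x, In x enumX.

Lemma susp_enum_all : forall y : Y, In y (susp_enum enumX).
Proof. intros y. apply (susp_enum_complete (fun _ => True)); [auto | destruct y; exact I]. Qed.

(* An open set with a section that contains two pole pairs contains the graph of a monotone
   map comparable to a constant (a pole, or base x0 when both coordinates differ). *)
Lemma fence_contractible_of_pole_pairs O P Q P' Q' :
  prod_open oY oY O /\ has_section oY O -> O (pole P, pole Q) -> O (pole P', pole Q') ->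
  (P, Q) <> (P', Q') -> fence_contractible sle (fun _ => True).
Proof.
  intros [HO Hs] HPQ HPQ' Hne.
  pose proof (fence_contractible_of_section sle sle_refl sle_trans _ susp_enum_all O) as Hgraph.
  pose proof (prod_alex_open_down_closed sle O HO) as Hdown.
  assert (Hbool : forall b b' b'' : bool, b <> b' -> b'' = b \/ b'' = b')
    by (intros [] [] []; auto; congruence).
  destruct (Bool.bool_dec P P') as [<-|HP]; [|destruct (Bool.bool_dec Q Q') as [<-|HQ]].
  - assert (HQ : Q <> Q') by congruence.
    apply (Hgraph (fun _ => pole P) (pole P) Hs); [right| |left]; simpl; auto.
    intros [a|b]; [apply (Hdown (pole P, pole Q)); [split; simpl; auto | exact HPQ]|].
    destruct (Hbool _ _ b HQ) as [->| ->]; assumption.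
  - apply (Hgraph (fun _ => pole Q) (pole Q) Hs); [left| |left]; simpl; auto.
    intros [a|b]; [apply (Hdown (pole P, pole Q)); [split; simpl; auto | exact HPQ]|].
    destruct (Hbool _ _ b HP) as [->| ->]; assumption.
  - set (g := fun y : Y => match y with
                           | base _ => base x0
                           | pole b => pole (if Bool.bool_dec b P then Q else Q') end).
    apply (Hgraph g (base x0) Hs); [left| |right].
    + intros [a|b]; [apply (Hdown (pole P, pole Q)); [split; simpl; auto | exact HPQ]|].
      simpl. destruct (Bool.bool_dec b P) as [->|HbP]; [exact HPQ|].
      destruct (Hbool _ _ b HP) as [->| ->]; [contradiction | exact HPQ'].
    + intros [a|b] [a'|b'] Hyy; simpl in *; subst; auto; contradiction.
    + intros [a|b] _; simpl; auto.
Qed.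

Lemma TC_cover_ge_four : ~ contractible (alex_open le) ->
  forall k, TC_cover oY k -> (4 <= k)%nat.
Proof.
  intros Hnc k [Us [HUs Hcov]]. apply Nat.nlt_ge. intros Hk. apply Hnc.
  apply (contractible_of_fence_contractible le le_refl le_trans).
  apply (fence_contractible_of_susp le le_refl le_trans le_anti (length enumX) _ enumX);
    [lia | auto | exists x0; exact I |].
  apply (fence_contractible_ext sle (fun _ => True)); [intros y; destruct y; simpl; tauto|].
  destruct (Hcov (pole true, pole true)) as [i1 [Hi1 H1]].
  destruct (Hcov (pole true, pole false)) as [i2 [Hi2 H2]].
  destruct (Hcov (pole false, pole true)) as [i3 [Hi3 H3]].
  destruct (Hcov (pole false, pole false)) as [i4 [Hi4 H4]].
  assert (Hsame : i1 = i2 \/ i1 = i3 \/ i1 = i4 \/ i2 = i3 \/ i2 = i4 \/ i3 = i4) by lia.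
  destruct Hsame as [<-|[<-|[<-|[<-|[<-|<-]]]]].
  - exact (fence_contractible_of_pole_pairs _ true true true false (HUs _ Hi1) H1 H2
             ltac:(discriminate)).
  - exact (fence_contractible_of_pole_pairs _ true true false true (HUs _ Hi1) H1 H3
             ltac:(discriminate)).
  - exact (fence_contractible_of_pole_pairs _ true true false false (HUs _ Hi1) H1 H4
             ltac:(discriminate)).
  - exact (fence_contractible_of_pole_pairs _ true false false true (HUs _ Hi2) H2 H3
             ltac:(discriminate)).
  - exact (fence_contractible_of_pole_pairs _ true false false false (HUs _ Hi2) H2 H4
             ltac:(discriminate)).
  - exact (fence_contractible_of_pole_pairs _ false true false false (HUs _ Hi3) H3 H4
             ltac:(discriminate)).
Qed.

End SuspensionTC.

Theorem theorem2 (X : Type) (le : X -> X -> Prop)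
  (enumX : list X) (Hfin : forall x, In x enumX)
  (Hrefl : forall x, le x x)
  (Hanti : forall x y, le x y -> le y x -> x = y)
  (Htrans : forall x y z, le x y -> le y z -> le x z)
  (xX : X) :
  (contractible (alex_open le) -> TC_eq (alex_open (susp_le le)) 1) /\
  (~ contractible (alex_open le) -> TC_eq (alex_open (susp_le le)) 4).
Proof.
  split.
  - intros [c [H [Hcont Hends]]]. split.
    + exists (fun _ _ => True). split; [|intros p; exists 0%nat; split; [lia | exact I]].
      intros i _. split.
      * apply (prod_alex_open_of_down_closed _ (susp_le_refl le Hrefl) (susp_le_trans le Htrans)).
        auto.
      * exact (contraction_section le Hrefl Htrans c H Hcont Hends).
    + intros k [Us [_ Hcov]]. destruct (Hcov (pole true, pole true)) as [i [Hi _]]. lia.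
  - intros Hnc. split.
    + exact (TC_cover_four le Hrefl Htrans xX).
    + exact (TC_cover_ge_four le Hrefl Htrans Hanti xX enumX Hfin Hnc).
Qed.
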